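(* Let $\mathbf{u}(\mathbf{x},t)$, $p(\mathbf{x},t)$, $\theta(\mathbf{x},t)$ be smooth solutions of the dimensionless incompressible, stratified, rotating Euler equations $$\frac{D\mathbf{u}}{Dt} + 2\boldsymbol{\Omega}\times\mathbf{u} + a_0\mathbf{k}\theta = -\nabla p,\qquad \operatorname{div}\mathbf{u}=0,\qquad \frac{D\theta}{Dt}=0,$$ where $\frac{D}{Dt}=\frac{\partial}{\partial t}+\mathbf{u}\cdot\nabla$, $\boldsymbol{\Omega}$ is the constant rotation vector, $\mathbf{k}$ the vertical unit vector and $a_0$ a constant. Let $q=(\boldsymbol{\omega}+2\boldsymbol{\Omega})\cdot\nabla\theta$ with $\boldsymbol{\omega}=\operatorname{curl}\mathbf{u}$, let $Q$ be a smooth function of one variable, and set $\boldsymbol{\mathcal{B}}=\nabla Q(q)\times\nabla\theta$, $\mathcal{B}=|\boldsymbol{\mathcal{B}}|$, $\hat{\boldsymbol{\mathcal{B}}}=\boldsymbol{\mathcal{B}}/\mathcal{B}$. Define $\mathbf{a}=\boldsymbol{\mathcal{B}}\cdot\nabla\mathbf{u}$ and $\mathbf{b}=\frac{D\mathbf{a}}{Dt}$ (which equals $-P\boldsymbol{\mathcal{B}}-\boldsymbol{\mathcal{B}}\cdot\nabla(2\boldsymbol{\Omega}\times\mathbf{u}+a_0\mathbf{k}\theta)$, where $P=(\partial^2 p/\partial x_i\partial x_j)$ is the pressure Hessian), and $$\boldsymbol{\chi}_a=\mathcal{B}^{-1}(\hat{\boldsymbol{\mathcal{B}}}\times\mathbf{a}),\qquad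 \boldsymbol{\chi}_b=\mathcal{B}^{-1}(\hat{\boldsymbol{\mathcal{B}}}\times\mathbf{b}),$$ with $\chi_a=|\boldsymbol{\chi}_a|$ and $\hat{\boldsymbol{\chi}}_a=\boldsymbol{\chi}_a/\chi_a$. Then, wherever $\mathcal{B}\neq0$ and $\chi_a\neq0$, the triple $\big(\hat{\boldsymbol{\mathcal{B}}},\,\hat{\boldsymbol{\chi}}_a,\,\hat{\boldsymbol{\mathcal{B}}}\times\hat{\boldsymbol{\chi}}_a\big)$ is an orthonormal frame whose Lagrangian time derivatives satisfy $$\frac{D\hat{\boldsymbol{\mathcal{B}}}}{Dt}=\mathbf{D}_a\times\hat{\boldsymbol{\mathcal{B}}},\qquad \frac{D(\hat{\boldsymbol{\mathcal{B}}}\times\hat{\boldsymbol{\chi}}_a)}{Dt}=\mathbf{D}_a\times(\hat{\boldsymbol{\mathcal{B}}}\times\hat{\boldsymbol{\chi}}_a),\qquad \frac{D\hat{\boldsymbol{\chi}}_a}{Dt}=\mathbf{D}_a\times\hat{\boldsymbol{\chi}}_a,$$ where the Darboux angular velocity vector is $$\mathbf{D}_a=\boldsymbol{\chi}_a+\frac{c_b}{\chi_a}\hat{\boldsymbol{\mathcal{B}}},\qquad c_b=\hat{\boldsymbol{\mathcal{B}}}\cdot(\hat{\boldsymbol{\chi}}_a\times\boldsymbol{\chi}_b).$$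
   Context: All fields are smooth functions of position $\mathbf{x}\in\mathbb{R}^3$ and time $t$. $\frac{D}{Dt}=\partial_t+\mathbf{u}\cdot\nabla$ is the Lagrangian (material) time derivative along the fluid flow. For vectors, $\boldsymbol{\mathcal{B}}\cdot\nabla\mathbf{u}$ denotes the vector with components $\sum_j\mathcal{B}_j\partial_j u_i$. In this setting $\boldsymbol{\mathcal{B}}$ satisfies $\frac{D\boldsymbol{\mathcal{B}}}{Dt}=\boldsymbol{\mathcal{B}}\cdot\nabla\mathbf{u}$ and $\operatorname{div}\boldsymbol{\mathcal{B}}=0$. *)

From Stdlib Require Import Reals Lra.
From Coquelicot Require Import Coquelicot.
Open Scope R_scope.

Record V3 := mkV3 { v1 : R; v2 : R; v3 : R }.

Definition vadd (a b : V3) : V3 := mkV3 (v1 a + v1 b) (v2 a + v2 b) (v3 a + v3 b).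
Definition vscal (c : R) (a : V3) : V3 := mkV3 (c * v1 a) (c * v2 a) (c * v3 a).
Definition vopp (a : V3) : V3 := vscal (-1) a.
Definition dot (a b : V3) : R := v1 a * v1 b + v2 a * v2 b + v3 a * v3 b.
Definition cross (a b : V3) : V3 :=
  mkV3 (v2 a * v3 b - v3 a * v2 b)
       (v3 a * v1 b - v1 a * v3 b)
       (v1 a * v2 b - v2 a * v1 b).
Definition vnorm (a : V3) : R := sqrt (dot a a).

Definition coord (i : nat) (a : V3) : R :=
  match i with 0%nat => v1 a | 1%nat => v2 a | _ => v3 a end.
Definition basis (i : nat) : V3 :=
  match i with 0%nat => mkV3 1 0 0 | 1%nat => mkV3 0 1 0 | _ => mkV3 0 0 1 end.
Definition kvec : V3 := basis 2.

Definition sfield := V3 -> R -> R.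
Definition vfield := V3 -> R -> V3.

Definition comp (i : nat) (U : vfield) : sfield := fun x t => coord i (U x t).

Definition dx (i : nat) (f : sfield) : sfield :=
  fun x t => Derive (fun s => f (vadd x (vscal s (basis i))) t) 0.
Definition dt (f : sfield) : sfield := fun x t => Derive (fun s => f x s) t.

Definition cont4 (f : sfield) : Prop :=
  forall x t eps, 0 < eps -> exists delta, 0 < delta /\
    forall y s, Rabs (v1 y - v1 x) < delta -> Rabs (v2 y - v2 x) < delta ->
      Rabs (v3 y - v3 x) < delta -> Rabs (s - t) < delta ->
      Rabs (f y s - f x t) < eps.

Fixpoint Cn (n : nat) (f : sfield) : Prop :=
  cont4 f /\
  match n with
  | 0%nat => True
  | S m =>
      (forall i, (i < 3)%nat ->
         (forall x t, ex_derive (fun s => f (vadd x (vscal s (basis i))) t) 0)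
         /\ Cn m (dx i f))
      /\ (forall x t, ex_derive (fun s => f x s) t) /\ Cn m (dt f)
  end.

Definition smooth_s (f : sfield) : Prop := forall n, Cn n f.
Definition smooth_v (U : vfield) : Prop := forall i, (i < 3)%nat -> smooth_s (comp i U).
Definition smooth1 (Q : R -> R) : Prop := forall n x, ex_derive_n Q n x.

Definition grad (f : sfield) : vfield :=
  fun x t => mkV3 (dx 0 f x t) (dx 1 f x t) (dx 2 f x t).
Definition div (U : vfield) : sfield :=
  fun x t => dx 0 (comp 0 U) x t + dx 1 (comp 1 U) x t + dx 2 (comp 2 U) x t.
Definition curl (U : vfield) : vfield :=
  fun x t => mkV3 (dx 1 (comp 2 U) x t - dx 2 (comp 1 U) x t)
                  (dx 2 (comp 0 U) x t - dx 0 (comp 2 U) x t)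
                  (dx 0 (comp 1 U) x t - dx 1 (comp 0 U) x t).

(** (B . grad) U : components sum_j B_j d_j U_i *)
Definition dirderiv (B : vfield) (U : vfield) : vfield :=
  fun x t => mkV3 (dot (B x t) (grad (comp 0 U) x t))
                  (dot (B x t) (grad (comp 1 U) x t))
                  (dot (B x t) (grad (comp 2 U) x t)).

Definition matD (u : vfield) (f : sfield) : sfield :=
  fun x t => dt f x t + dot (u x t) (grad f x t).
Definition matDv (u : vfield) (W : vfield) : vfield :=
  fun x t => mkV3 (matD u (comp 0 W) x t) (matD u (comp 1 W) x t)
                  (matD u (comp 2 W) x t).

Section Quantities.
Variables (Omega : V3) (u : vfield) (theta : sfield) (Q : R -> R).

Definition qPV : sfield :=
  fun x t => dot (vadd (curl u x t) (vscal 2 Omega)) (grad theta x t).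
Definition Bvec : vfield :=
  fun x t => cross (grad (fun y s => Q (qPV y s)) x t) (grad theta x t).
Definition Bnorm : sfield := fun x t => vnorm (Bvec x t).
Definition Bhat : vfield := fun x t => vscal (/ Bnorm x t) (Bvec x t).
Definition avec : vfield := dirderiv Bvec u.
Definition bvec : vfield := matDv u avec.
Definition chi_a : vfield :=
  fun x t => vscal (/ Bnorm x t) (cross (Bhat x t) (avec x t)).
Definition chi_b : vfield :=
  fun x t => vscal (/ Bnorm x t) (cross (Bhat x t) (bvec x t)).
Definition chi_a_norm : sfield := fun x t => vnorm (chi_a x t).
Definition chi_a_hat : vfield := fun x t => vscal (/ chi_a_norm x t) (chi_a x t).
Definition c_b : sfield :=
  fun x t => dot (Bhat x t) (cross (chi_a_hat x t) (chi_b x t)).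
Definition Darboux_a : vfield :=
  fun x t => vadd (chi_a x t) (vscal (c_b x t / chi_a_norm x t) (Bhat x t)).
Definition third_vec : vfield := fun x t => cross (Bhat x t) (chi_a_hat x t).
End Quantities.

From Pilot Require Import Defs.
From Stdlib Require Import Reals Lra Lia Nsatz FunctionalExtensionality.
From Coquelicot Require Import Coquelicot.
Open Scope R_scope.

(* Write e = B/|B| and chi = (e × a)/|B|, where a = DB/Dt.  The unit vector e moves by the part
   of a/|B| orthogonal to e, which is chi × e.  Differentiating chi gives chi_b plus a multiple of
   chi, so its direction chi^ moves by the part of chi_b/|chi| orthogonal to chi^, namely
   (chi^ × chi_b) × chi^ / |chi|; since chi^ and chi_b are both orthogonal to e, chi^ × chi_b is
   c_b e, which accounts for the c_b/|chi| term of the Darboux vector.  The equation for e × chi^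
   then follows from the Jacobi identity. *)

Ltac vec_expand :=
  repeat match goal with
  | v : V3 |- _ => let a := fresh "a" in let b := fresh "b" in let c := fresh "c" in
                   destruct v as [a b c]
  end;
  unfold vadd, vscal, dot, cross in *; cbn [v1 v2 v3] in *.

Lemma dot_comm a b : dot a b = dot b a.
Proof. vec_expand; ring. Qed.

Lemma dot_cross_l a b : dot a (cross a b) = 0.
Proof. vec_expand; ring. Qed.

Lemma dot_cross_r a b : dot b (cross a b) = 0.
Proof. vec_expand; ring. Qed.

Lemma dot_cross_cross a b :
  dot (cross a b) (cross a b) = dot a a * dot b b - dot a b * dot a b.
Proof. vec_expand; ring. Qed.

Lemma cross_jacobi d p q :
  cross d (cross p q) = vadd (cross (cross d p) q) (cross p (cross d q)).
Proof. vec_expand; f_equal; ring. Qed.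

Lemma cross_cross_unit e v : dot e e = 1 ->
  cross (cross e v) e = vadd v (vscal (- dot v e) e).
Proof.
  intros He.
  transitivity (vadd (vscal (dot e e) v) (vscal (- dot v e) e)).
  - vec_expand; f_equal; ring.
  - rewrite He; vec_expand; f_equal; ring.
Qed.

Lemma cross_orthogonal_unit e v w : dot e e = 1 -> dot e v = 0 -> dot e w = 0 ->
  cross v w = vscal (dot e (cross v w)) e.
Proof. vec_expand; intros He Hv Hw; f_equal; nsatz. Qed.

Definition orthonormal (a b c : V3) : Prop :=
  dot a a = 1 /\ dot b b = 1 /\ dot c c = 1 /\
  dot a b = 0 /\ dot a c = 0 /\ dot b c = 0.

Lemma orthonormal_cross e f : dot e e = 1 -> dot f f = 1 -> dot e f = 0 ->
  orthonormal e f (cross e f).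
Proof.
  intros He Hf Hef; repeat split; auto using dot_cross_l, dot_cross_r.
  rewrite dot_cross_cross, He, Hf, Hef; ring.
Qed.

Lemma vnorm_neq0_pos w : vnorm w <> 0 -> 0 < dot w w.
Proof.
  intros Hw; destruct (Rlt_or_le 0 (dot w w)) as [H|H]; auto.
  exfalso; apply Hw, sqrt_neg_0, H.
Qed.

Lemma vnorm_sqr w : vnorm w * vnorm w = dot w w.
Proof. apply sqrt_sqrt; vec_expand; nra. Qed.

Lemma cross_vscal_l k a b : cross (vscal k a) b = vscal k (cross a b).
Proof. vec_expand; f_equal; ring. Qed.

Lemma cross_vadd_vscal_l p q c : cross (vadd p (vscal c q)) q = cross p q.
Proof. vec_expand; f_equal; ring. Qed.

Lemma cross_vscal_vadd_vscal k l p q :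
  cross (vscal k p) (vadd q (vscal l p)) = cross (vscal k p) q.
Proof. vec_expand; f_equal; ring. Qed.

Lemma vadd_vscal0 x v : vadd x (vscal 0 v) = x.
Proof. vec_expand; f_equal; ring. Qed.

Definition ex_partials (f : sfield) (x : V3) (t : R) : Prop :=
  ex_derive (fun s => f x s) t /\
  forall i, (i < 3)%nat -> ex_derive (fun r => f (vadd x (vscal r (basis i))) t) 0.

Definition ex_partials_v (W : vfield) (x : V3) (t : R) : Prop :=
  ex_partials (fun y s => v1 (W y s)) x t /\ ex_partials (fun y s => v2 (W y s)) x t /\
  ex_partials (fun y s => v3 (W y s)) x t.

Section PointwiseRules.
Variables (x : V3) (t : R) (f g : sfield).
Hypotheses (Hf : ex_partials f x t) (Hg : ex_partials g x t).

Lemma partials_plus :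
  dt (fun y s => f y s + g y s) x t = dt f x t + dt g x t /\
  forall i, (i < 3)%nat -> dx i (fun y s => f y s + g y s) x t = dx i f x t + dx i g x t.
Proof.
  destruct Hf as [Ft Fx], Hg as [Gt Gx]; split.
  - now apply Derive_plus.
  - intros i hi; now apply Derive_plus; [apply Fx | apply Gx].
Qed.

Lemma partials_minus :
  dt (fun y s => f y s - g y s) x t = dt f x t - dt g x t /\
  forall i, (i < 3)%nat -> dx i (fun y s => f y s - g y s) x t = dx i f x t - dx i g x t.
Proof.
  destruct Hf as [Ft Fx], Hg as [Gt Gx]; split.
  - now apply Derive_minus.
  - intros i hi; now apply Derive_minus; [apply Fx | apply Gx].
Qed.

Lemma partials_mult :
  dt (fun y s => f y s * g y s) x t = dt f x t * g x t + f x t * dt g x t /\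
  forall i, (i < 3)%nat ->
    dx i (fun y s => f y s * g y s) x t = dx i f x t * g x t + f x t * dx i g x t.
Proof.
  destruct Hf as [Ft Fx], Hg as [Gt Gx]; split.
  - now apply Derive_mult.
  - intros i hi; unfold dx; rewrite Derive_mult, vadd_vscal0; auto.
Qed.

Lemma partials_comp (h : R -> R) : ex_derive h (f x t) ->
  dt (fun y s => h (f y s)) x t = Derive h (f x t) * dt f x t /\
  forall i, (i < 3)%nat -> dx i (fun y s => h (f y s)) x t = Derive h (f x t) * dx i f x t.
Proof.
  intros Hh; destruct Hf as [Ft Fx]; split.
  - unfold dt; rewrite Derive_comp; auto; apply Rmult_comm.
  - intros i hi; unfold dx; rewrite Derive_comp, vadd_vscal0; auto; [apply Rmult_comm|].
    now rewrite vadd_vscal0.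
Qed.

Lemma ex_partials_plus : ex_partials (fun y s => f y s + g y s) x t.
Proof.
  destruct Hf as [Ft Fx], Hg as [Gt Gx]; split.
  - now apply (ex_derive_plus (fun s => f x s) (fun s => g x s)).
  - intros i hi; apply (ex_derive_plus (fun r => f _ t) (fun r => g _ t)); auto.
Qed.

Lemma ex_partials_minus : ex_partials (fun y s => f y s - g y s) x t.
Proof.
  destruct Hf as [Ft Fx], Hg as [Gt Gx]; split.
  - now apply (ex_derive_minus (fun s => f x s) (fun s => g x s)).
  - intros i hi; apply (ex_derive_minus (fun r => f _ t) (fun r => g _ t)); auto.
Qed.

Lemma ex_partials_mult : ex_partials (fun y s => f y s * g y s) x t.
Proof.
  destruct Hf as [Ft Fx], Hg as [Gt Gx]; split.
  - now apply (ex_derive_mult (fun s => f x s) (fun s => g x s)).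
  - intros i hi; apply (ex_derive_mult (fun r => f _ t) (fun r => g _ t)); auto.
Qed.

Lemma ex_partials_comp (h : R -> R) : ex_derive h (f x t) ->
  ex_partials (fun y s => h (f y s)) x t.
Proof.
  intros Hh; destruct Hf as [Ft Fx]; split.
  - now apply (ex_derive_comp h (fun s => f x s)).
  - intros i hi; apply (ex_derive_comp h (fun r => f _ t)); auto.
    now rewrite vadd_vscal0.
Qed.

End PointwiseRules.

Fixpoint ex_partials_n (n : nat) (f : sfield) : Prop :=
  match n with
  | O => True
  | S m => (forall y s, ex_partials f y s) /\
           (forall i, (i < 3)%nat -> ex_partials_n m (dx i f)) /\ ex_partials_n m (dt f)
  end.

Definition ex_partials_n_v (n : nat) (W : vfield) : Prop :=
  ex_partials_n n (fun y s => v1 (W y s)) /\ ex_partials_n n (fun y s => v2 (W y s)) /\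
  ex_partials_n n (fun y s => v3 (W y s)).

Lemma Cn_ex_partials_n n f : Cn n f -> ex_partials_n n f.
Proof.
  revert f; induction n as [|n IH]; intros f Hf; [exact I|].
  destruct Hf as (_ & Hx & Ht & Hdt); split; [|split].
  - intros y s; split; [apply Ht | intros i hi; apply (Hx i hi)].
  - intros i hi; apply IH, (Hx i hi).
  - apply IH, Hdt.
Qed.

Lemma ex_partials_n_S n f : ex_partials_n (S n) f -> ex_partials_n n f.
Proof.
  revert f; induction n as [|n IH]; intros f Hf; [exact I|].
  destruct Hf as (Hp & Hx & Ht); split; [|split].
  - exact Hp.
  - intros i hi; apply IH, Hx, hi.
  - apply IH, Ht.
Qed.

Lemma sfield_ext (f g : sfield) : (forall y s, f y s = g y s) -> f = g.
Proof. intros H; do 2 (apply functional_extensionality; intro); apply H. Qed.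

Lemma ex_partials_n_const n c : ex_partials_n n (fun _ _ => c).
Proof.
  revert c; induction n as [|n IH]; intros c; [exact I|].
  assert (E : forall f, (forall y s, f y s = 0) -> ex_partials_n n f)
    by (intros f Hf; rewrite (sfield_ext f (fun _ _ => 0) Hf); apply IH).
  split; [|split].
  - intros y s; split; [|intros]; apply ex_derive_const.
  - intros i hi; apply E; intros; unfold dx; apply Derive_const.
  - apply E; intros; unfold dt; apply Derive_const.
Qed.

Lemma ex_partials_n_plus n f g : ex_partials_n n f -> ex_partials_n n g ->
  ex_partials_n n (fun y s => f y s + g y s).
Proof.
  revert f g; induction n as [|n IH]; intros f g Hf Hg; [exact I|].
  destruct Hf as (Fp & Fx & Ft), Hg as (Gp & Gx & Gt); split; [|split].
  - intros y s; now apply ex_partials_plus.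
  - intros i hi.
    rewrite (sfield_ext _ (fun y s => dx i f y s + dx i g y s))
      by (intros y s; now apply (partials_plus y s f g)).
    apply IH; auto.
  - rewrite (sfield_ext _ (fun y s => dt f y s + dt g y s))
      by (intros y s; now apply (partials_plus y s f g)).
    apply IH; auto.
Qed.

Lemma ex_partials_n_mult n f g : ex_partials_n n f -> ex_partials_n n g ->
  ex_partials_n n (fun y s => f y s * g y s).
Proof.
  revert f g; induction n as [|n IH]; intros f g Hf Hg; [exact I|].
  pose proof (ex_partials_n_S _ _ Hf) as Hf'; pose proof (ex_partials_n_S _ _ Hg) as Hg'.
  destruct Hf as (Fp & Fx & Ft), Hg as (Gp & Gx & Gt); split; [|split].
  - intros y s; now apply ex_partials_mult.
  - intros i hi.
    rewrite (sfield_ext _ (fun y s => dx i f y s * g y s + f y s * dx i g y s))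
      by (intros y s; now apply (partials_mult y s f g)).
    apply ex_partials_n_plus; apply IH; auto.
  - rewrite (sfield_ext _ (fun y s => dt f y s * g y s + f y s * dt g y s))
      by (intros y s; now apply (partials_mult y s f g)).
    apply ex_partials_n_plus; apply IH; auto.
Qed.

Lemma ex_partials_n_minus n f g : ex_partials_n n f -> ex_partials_n n g ->
  ex_partials_n n (fun y s => f y s - g y s).
Proof.
  intros Hf Hg.
  rewrite (sfield_ext _ (fun y s => f y s + (fun _ _ => -1) y s * g y s)) by (intros; ring).
  apply ex_partials_n_plus, ex_partials_n_mult; auto using ex_partials_n_const.
Qed.

Lemma smooth1_Derive h : smooth1 h -> smooth1 (Derive h).
Proof.
  intros Hh n z.
  assert (E : forall m r, Derive_n (Derive h) m r = Derive_n h (S m) r).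
  { induction m as [|m IH]; intros r; [reflexivity|].
    apply Derive_ext; intros; apply IH. }
  destruct n as [|n]; [exact I|].
  apply (ex_derive_ext (Derive_n h (S n))); [intros; symmetry; apply E | apply (Hh (S (S n)))].
Qed.

Lemma ex_partials_n_comp n : forall h f, smooth1 h -> ex_partials_n n f ->
  ex_partials_n n (fun y s => h (f y s)).
Proof.
  induction n as [|n IH]; intros h f Hh Hf; [exact I|].
  pose proof (ex_partials_n_S _ _ Hf) as Hf'.
  assert (Hh1 : forall z, ex_derive h z) by (intros z; apply (Hh 1%nat z)).
  destruct Hf as (Fp & Fx & Ft); split; [|split].
  - intros y s; now apply ex_partials_comp.
  - intros i hi.
    rewrite (sfield_ext _ (fun y s => Derive h (f y s) * dx i f y s))
      by (intros y s; now apply (partials_comp y s f)).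
    apply ex_partials_n_mult; auto using smooth1_Derive.
  - rewrite (sfield_ext _ (fun y s => Derive h (f y s) * dt f y s))
      by (intros y s; now apply (partials_comp y s f)).
    apply ex_partials_n_mult; auto using smooth1_Derive.
Qed.

Lemma ex_partials_n_v_const n c : ex_partials_n_v n (fun _ _ => c).
Proof. split; [|split]; apply ex_partials_n_const. Qed.

Lemma ex_partials_n_v_add n V W : ex_partials_n_v n V -> ex_partials_n_v n W ->
  ex_partials_n_v n (fun y s => vadd (V y s) (W y s)).
Proof.
  intros (HV1 & HV2 & HV3) (HW1 & HW2 & HW3); split; [|split]; now apply ex_partials_n_plus.
Qed.

Lemma ex_partials_n_dot n V W : ex_partials_n_v n V -> ex_partials_n_v n W ->
  ex_partials_n n (fun y s => dot (V y s) (W y s)).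
Proof.
  intros (HV1 & HV2 & HV3) (HW1 & HW2 & HW3).
  apply ex_partials_n_plus; [apply ex_partials_n_plus|]; now apply ex_partials_n_mult.
Qed.

Lemma ex_partials_n_v_cross n V W : ex_partials_n_v n V -> ex_partials_n_v n W ->
  ex_partials_n_v n (fun y s => cross (V y s) (W y s)).
Proof.
  intros (HV1 & HV2 & HV3) (HW1 & HW2 & HW3).
  split; [|split]; apply ex_partials_n_minus; now apply ex_partials_n_mult.
Qed.

Lemma ex_partials_n_v_grad n f : ex_partials_n (S n) f -> ex_partials_n_v n (grad f).
Proof. intros (_ & Hx & _); split; [|split]; apply Hx; lia. Qed.

Lemma ex_partials_n_v_curl n U : (forall i, (i < 3)%nat -> ex_partials_n (S n) (Defs.comp i U)) ->
  ex_partials_n_v n (curl U).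
Proof.
  intros HU.
  assert (Hd : forall i j, (i < 3)%nat -> (j < 3)%nat -> ex_partials_n n (dx i (Defs.comp j U)))
    by (intros i j hi hj; apply (HU j hj), hi).
  split; [|split]; apply ex_partials_n_minus; apply Hd; lia.
Qed.

Lemma ex_partials_v_of_n W x t : ex_partials_n_v 1 W -> ex_partials_v W x t.
Proof. intros ((H1 & _) & (H2 & _) & (H3 & _)); split; [|split]; auto. Qed.

Section FlowRegularity.
Variables (Omega : V3) (u : vfield) (theta : sfield) (Q : R -> R).
Hypotheses (Hu : smooth_v u) (Htheta : smooth_s theta) (HQ : smooth1 Q).

Lemma ex_partials_n_qPV n : ex_partials_n n (qPV Omega u theta).
Proof.
  apply ex_partials_n_dot; [apply ex_partials_n_v_add; [|apply ex_partials_n_v_const]|].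
  - apply ex_partials_n_v_curl; intros i hi; apply Cn_ex_partials_n, Hu, hi.
  - apply ex_partials_n_v_grad, Cn_ex_partials_n, Htheta.
Qed.

Lemma ex_partials_n_v_Bvec n : ex_partials_n_v n (Bvec Omega u theta Q).
Proof.
  apply ex_partials_n_v_cross; apply ex_partials_n_v_grad.
  - apply ex_partials_n_comp; [exact HQ | apply ex_partials_n_qPV].
  - apply Cn_ex_partials_n, Htheta.
Qed.

Lemma ex_partials_n_v_avec n : ex_partials_n_v n (avec Omega u theta Q).
Proof.
  split; [|split]; apply ex_partials_n_dot; try apply ex_partials_n_v_Bvec;
    apply ex_partials_n_v_grad, Cn_ex_partials_n, Hu; lia.
Qed.

End FlowRegularity.

Ltac expand_matD rule :=
  let Et := fresh "Et" in let Ex := fresh "Ex" in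
  destruct rule as [Et Ex]; unfold matD, grad, dot; cbn [v1 v2 v3];
  rewrite Et, (Ex 0%nat), (Ex 1%nat), (Ex 2%nat) by lia.

Ltac solve_partials :=
  repeat match goal with
  | |- ex_partials (fun y s => @?f y s + @?g y s) _ _ => apply (ex_partials_plus _ _ f g); cbv beta
  | |- ex_partials (fun y s => @?f y s - @?g y s) _ _ => apply (ex_partials_minus _ _ f g); cbv beta
  | |- ex_partials (fun y s => @?f y s * @?g y s) _ _ => apply (ex_partials_mult _ _ f g); cbv beta
  end; assumption.

Section MaterialDerivative.
Variables (u : vfield) (x : V3) (t : R).

Lemma matD_plus f g : ex_partials f x t -> ex_partials g x t ->
  matD u (fun y s => f y s + g y s) x t = matD u f x t + matD u g x t.
Proof. intros Hf Hg; expand_matD (partials_plus x t f g Hf Hg); ring. Qed.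

Lemma matD_minus f g : ex_partials f x t -> ex_partials g x t ->
  matD u (fun y s => f y s - g y s) x t = matD u f x t - matD u g x t.
Proof. intros Hf Hg; expand_matD (partials_minus x t f g Hf Hg); ring. Qed.

Lemma matD_mult f g : ex_partials f x t -> ex_partials g x t ->
  matD u (fun y s => f y s * g y s) x t = matD u f x t * g x t + f x t * matD u g x t.
Proof. intros Hf Hg; expand_matD (partials_mult x t f g Hf Hg); ring. Qed.

Lemma matD_comp (h : R -> R) f : ex_derive h (f x t) -> ex_partials f x t ->
  matD u (fun y s => h (f y s)) x t = Derive h (f x t) * matD u f x t.
Proof. intros Hh Hf; expand_matD (partials_comp x t f Hf h Hh); ring. Qed.

Lemma ex_partials_dot V W : ex_partials_v V x t -> ex_partials_v W x t ->
  ex_partials (fun y s => dot (V y s) (W y s)) x t.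
Proof. intros (HV1 & HV2 & HV3) (HW1 & HW2 & HW3); unfold dot; solve_partials. Qed.

Lemma ex_partials_v_scal f W : ex_partials f x t -> ex_partials_v W x t ->
  ex_partials_v (fun y s => vscal (f y s) (W y s)) x t.
Proof. intros Hf (HW1 & HW2 & HW3); split; [|split]; cbn [vscal v1 v2 v3]; solve_partials. Qed.

Lemma ex_partials_v_cross V W : ex_partials_v V x t -> ex_partials_v W x t ->
  ex_partials_v (fun y s => cross (V y s) (W y s)) x t.
Proof.
  intros (HV1 & HV2 & HV3) (HW1 & HW2 & HW3); split; [|split]; cbn [cross v1 v2 v3];
    solve_partials.
Qed.

Lemma matD_dot V W : ex_partials_v V x t -> ex_partials_v W x t ->
  matD u (fun y s => dot (V y s) (W y s)) x t =
  dot (matDv u V x t) (W x t) + dot (V x t) (matDv u W x t).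
Proof.
  intros (HV1 & HV2 & HV3) (HW1 & HW2 & HW3); unfold dot at 1.
  rewrite !matD_plus, !matD_mult by solve_partials.
  unfold matDv, Defs.comp, dot; cbn [coord v1 v2 v3]; ring.
Qed.

Lemma matDv_scal f W : ex_partials f x t -> ex_partials_v W x t ->
  matDv u (fun y s => vscal (f y s) (W y s)) x t =
  vadd (vscal (matD u f x t) (W x t)) (vscal (f x t) (matDv u W x t)).
Proof.
  intros Hf (HW1 & HW2 & HW3); unfold matDv, Defs.comp; cbn [coord vscal v1 v2 v3].
  rewrite !matD_mult by assumption; reflexivity.
Qed.

Lemma matDv_cross V W : ex_partials_v V x t -> ex_partials_v W x t ->
  matDv u (fun y s => cross (V y s) (W y s)) x t =
  vadd (cross (matDv u V x t) (W x t)) (cross (V x t) (matDv u W x t)).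
Proof.
  intros (HV1 & HV2 & HV3) (HW1 & HW2 & HW3); unfold matDv, Defs.comp; cbn [coord cross v1 v2 v3].
  rewrite !matD_minus, !matD_mult by solve_partials.
  unfold vadd, cross; cbn [v1 v2 v3]; f_equal; ring.
Qed.

End MaterialDerivative.

Definition normalize (W : vfield) : vfield := fun y s => vscal (/ vnorm (W y s)) (W y s).

(* The paper's B^-1 (B^ × A) for an arbitrary field B in place of [Bvec]: [chi_a] for A = a and
   [chi_b] for A = Da/Dt. *)
Definition chi_field (B A : vfield) : vfield :=
  fun y s => vscal (/ vnorm (B y s)) (cross (normalize B y s) (A y s)).

Lemma dot_normalize w : vnorm w <> 0 -> dot (vscal (/ vnorm w) w) (vscal (/ vnorm w) w) = 1.
Proof.
  intros Hw; transitivity (/ vnorm w * / vnorm w * dot w w); [vec_expand; ring|].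
  rewrite <- vnorm_sqr; field; exact Hw.
Qed.

Lemma is_derive_inv_sqrt z : 0 < z -> is_derive (fun r => / sqrt r) z (- / (2 * z * sqrt z)).
Proof.
  intros Hz; assert (0 < sqrt z) by now apply sqrt_lt_R0.
  auto_derive; [lra|]. rewrite sqrt_sqrt by lra. field; lra.
Qed.

Lemma Derive_inv_sqrt z : 0 < z -> Derive (fun r => / sqrt r) z = - / (2 * z * sqrt z).
Proof. intros Hz; apply is_derive_unique, is_derive_inv_sqrt, Hz. Qed.

Section Normalization.
Variables (u : vfield) (x : V3) (t : R) (W : vfield).
Hypotheses (HW : ex_partials_v W x t) (HWn : vnorm (W x t) <> 0).

Lemma ex_partials_inv_vnorm : ex_partials (fun y s => / vnorm (W y s)) x t.
Proof.
  change (ex_partials (fun y s => (fun r => / sqrt r) (dot (W y s) (W y s))) x t).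
  apply ex_partials_comp; [now apply ex_partials_dot|].
  eexists; apply is_derive_inv_sqrt, vnorm_neq0_pos, HWn.
Qed.

Lemma matD_inv_vnorm :
  matD u (fun y s => / vnorm (W y s)) x t = - dot (W x t) (matDv u W x t) / vnorm (W x t) ^ 3.
Proof.
  pose proof (vnorm_neq0_pos _ HWn) as Hpos.
  change (fun y s => / vnorm (W y s)) with (fun y s => / sqrt (dot (W y s) (W y s))).
  rewrite (matD_comp u x t (fun r => / sqrt r) (fun y s => dot (W y s) (W y s)));
    [| eexists; now apply is_derive_inv_sqrt | now apply ex_partials_dot].
  rewrite Derive_inv_sqrt, matD_dot by assumption.
  rewrite (dot_comm (matDv u W x t)); fold (vnorm (W x t)); rewrite <- vnorm_sqr.
  field; exact HWn.
Qed.

Lemma ex_partials_v_normalize : ex_partials_v (normalize W) x t.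
Proof. apply ex_partials_v_scal; [apply ex_partials_inv_vnorm | exact HW]. Qed.

Lemma matDv_normalize :
  matDv u (normalize W) x t =
  cross (vscal (/ vnorm (W x t)) (cross (normalize W x t) (matDv u W x t))) (normalize W x t).
Proof.
  pose proof (dot_normalize _ HWn) as Hunit.
  unfold normalize at 1.
  rewrite (matDv_scal u x t _ _ ex_partials_inv_vnorm HW), matD_inv_vnorm.
  transitivity (vscal (/ vnorm (W x t))
    (cross (cross (normalize W x t) (matDv u W x t)) (normalize W x t))).
  - rewrite cross_cross_unit by exact Hunit; unfold normalize.
    generalize (W x t) (matDv u W x t) HWn; clear; intros w dw Hw.
    set (n := vnorm w) in *; clearbody n; vec_expand; f_equal; field; exact Hw.
  - symmetry; apply cross_vscal_l.
Qed.
End Normalization.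

Lemma cross_normalize_vadd_vscal W y s q l :
  cross (normalize W y s) (vadd q (vscal l (W y s))) = cross (normalize W y s) q.
Proof. apply cross_vscal_vadd_vscal. Qed.

Definition darboux (u B A : vfield) (x : V3) (t : R) : V3 :=
  vadd (chi_field B A x t)
       (vscal (dot (normalize B x t)
                   (cross (normalize (chi_field B A) x t) (chi_field B (matDv u A) x t))
               / vnorm (chi_field B A x t))
              (normalize B x t)).

Lemma dot_normalize_chi_field B A x t : dot (normalize B x t) (chi_field B A x t) = 0.
Proof.
  unfold chi_field; generalize (normalize B x t) (A x t) (/ vnorm (B x t)); clear.
  intros e a k; vec_expand; ring.
Qed.

Lemma dot_normalize_chi_hat B A x t :
  dot (normalize B x t) (normalize (chi_field B A) x t) = 0.
Proof.
  unfold normalize at 2; generalize (/ vnorm (chi_field B A x t)); intros k.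
  transitivity (k * dot (normalize B x t) (chi_field B A x t)).
  - generalize (normalize B x t) (chi_field B A x t); clear; intros; vec_expand; ring.
  - rewrite dot_normalize_chi_field; ring.
Qed.

Section Darboux.
Variables (u B A : vfield) (x : V3) (t : R).
Hypotheses (HB : ex_partials_v B x t) (HA : ex_partials_v A x t)
  (HDB : matDv u B x t = A x t) (HBn : vnorm (B x t) <> 0).

Lemma ex_partials_v_chi_field : ex_partials_v (chi_field B A) x t.
Proof.
  apply ex_partials_v_scal; [now apply ex_partials_inv_vnorm|].
  apply ex_partials_v_cross; [now apply ex_partials_v_normalize | exact HA].
Qed.

Lemma matDv_chi_field :
  matDv u (chi_field B A) x t =
  vadd (chi_field B (matDv u A) x t)
       (vscal (- 2 * dot (A x t) (normalize B x t) / vnorm (B x t)) (chi_field B A x t)).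
Proof.
  pose proof (ex_partials_inv_vnorm x t B HB HBn) as Hinv.
  pose proof (ex_partials_v_normalize x t B HB HBn) as Hnorm.
  unfold chi_field at 1.
  rewrite (matDv_scal u x t _ _ Hinv (ex_partials_v_cross x t _ _ Hnorm HA)).
  rewrite (matD_inv_vnorm u x t B HB HBn), (matDv_cross u x t _ _ Hnorm HA).
  rewrite (matDv_normalize u x t B HB HBn), HDB.
  unfold chi_field, normalize.
  generalize (B x t) (A x t) (matDv u A x t) HBn; clear; intros b a db Hb.
  set (n := vnorm b) in *; clearbody n; vec_expand; f_equal; field; exact Hb.
Qed.

Lemma matDv_bhat : matDv u (normalize B) x t = cross (darboux u B A x t) (normalize B x t).
Proof.
  rewrite (matDv_normalize u x t B HB HBn), HDB.
  unfold darboux; rewrite cross_vadd_vscal_l; reflexivity.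
Qed.

Hypothesis HXn : vnorm (chi_field B A x t) <> 0.

Lemma matDv_chi_hat :
  matDv u (normalize (chi_field B A)) x t =
  cross (darboux u B A x t) (normalize (chi_field B A) x t).
Proof.
  rewrite (matDv_normalize u x t _ ex_partials_v_chi_field HXn), matDv_chi_field.
  rewrite cross_normalize_vadd_vscal.
  set (e := normalize B x t); set (Xh := normalize (chi_field B A) x t).
  set (Xb := chi_field B (matDv u A) x t).
  assert (Hc : cross Xh Xb = vscal (dot e (cross Xh Xb)) e).
  { apply cross_orthogonal_unit;
      [apply dot_normalize, HBn | apply dot_normalize_chi_hat | apply dot_normalize_chi_field]. }
  unfold darboux; fold e Xh Xb; set (c := dot e (cross Xh Xb)) in *; rewrite Hc.
  unfold Xh, normalize; generalize (chi_field B A x t) e c; clear; intros X e' c'.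
  generalize (vnorm X); intros k; unfold Rdiv; vec_expand; f_equal; ring.
Qed.

Lemma matDv_binormal :
  matDv u (fun y s => cross (normalize B y s) (normalize (chi_field B A) y s)) x t =
  cross (darboux u B A x t) (cross (normalize B x t) (normalize (chi_field B A) x t)).
Proof.
  rewrite matDv_cross, matDv_bhat, matDv_chi_hat, <- cross_jacobi; [reflexivity | |].
  - now apply ex_partials_v_normalize.
  - apply ex_partials_v_normalize; [apply ex_partials_v_chi_field | exact HXn].
Qed.
End Darboux.

Theorem theorem1
  (Omega : V3) (a0 : R) (u : vfield) (p theta : sfield) (Q : R -> R)
  (Hu : smooth_v u) (Hp : smooth_s p) (Htheta : smooth_s theta) (HQ : smooth1 Q)
  (Hmom : forall x t,
     vadd (vadd (matDv u u x t) (cross (vscal 2 Omega) (u x t)))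
          (vscal (a0 * theta x t) kvec) = vopp (grad p x t))
  (Hdiv : forall x t, div u x t = 0)
  (Htheta_adv : forall x t, matD u theta x t = 0)
  (HBevol : forall x t, matDv u (Bvec Omega u theta Q) x t
                        = dirderiv (Bvec Omega u theta Q) u x t)
  (HBdiv : forall x t, div (Bvec Omega u theta Q) x t = 0) :
  forall x t,
    Bnorm Omega u theta Q x t <> 0 ->
    chi_a_norm Omega u theta Q x t <> 0 ->
    let Bh := Bhat Omega u theta Q in
    let Xh := chi_a_hat Omega u theta Q in
    let Th := third_vec Omega u theta Q in
    let Da := Darboux_a Omega u theta Q x t in
    (dot (Bh x t) (Bh x t) = 1 /\ dot (Xh x t) (Xh x t) = 1 /\
     dot (Th x t) (Th x t) = 1 /\ dot (Bh x t) (Xh x t) = 0 /\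
     dot (Bh x t) (Th x t) = 0 /\ dot (Xh x t) (Th x t) = 0) /\
    matDv u Bh x t = cross Da (Bh x t) /\
    matDv u Th x t = cross Da (Th x t) /\
    matDv u Xh x t = cross Da (Xh x t).
Proof.
  intros x t HBn HXn.
  pose proof (ex_partials_v_of_n _ x t (ex_partials_n_v_Bvec Omega u theta Q Hu Htheta HQ 1)) as HB.
  pose proof (ex_partials_v_of_n _ x t (ex_partials_n_v_avec Omega u theta Q Hu Htheta HQ 1)) as HA.
  pose proof (HBevol x t) as HDB.
  split; [|split; [|split]].
  - exact (orthonormal_cross _ _ (dot_normalize _ HBn) (dot_normalize _ HXn)
             (dot_normalize_chi_hat _ _ x t)).
  - exact (matDv_bhat u _ (avec Omega u theta Q) x t HB HDB HBn).
  - exact (matDv_binormal u _ _ x t HB HA HDB HBn HXn).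
  - exact (matDv_chi_hat u _ _ x t HB HA HDB HBn HXn).
Qed.
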